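(* (a) For every $n$-variable symmetric Boolean function $f$ it holds that $NN(f)\le n+1$. (b) For the $n$-variable parity function, $BNN(x_1\oplus x_2\oplus\cdots\oplus x_n)=2^n$.
   Context: For a Boolean function $f:\{0,1\}^n\to\{0,1\}$, points $a$ with $f(a)=1$ are positive and those with $f(a)=0$ negative. A nearest neighbor representation of $f$ is a pair of disjoint sets $(P,N)$ of points of $\mathbb R^n$ (positive and negative prototypes) such that for every $a\in\{0,1\}^n$: if $a$ is positive, there is $b\in P$ with $d(a,b)<d(a,c)$ for all $c\in N$; if $a$ is negative, there is $b\in N$ with $d(a,b)<d(a,c)$ for all $c\in P$. Here $d$ is the Euclidean distance. The size of the representation is $|P\cup N|$. $NN(f)$ is the minimum size of a nearest neighbor representation of $f$; $BNN(f)$ is the minimum size of such a representation with $P\cup N\subseteq\{0,1\}^n$ (Boolean prototypes). A Boolean function is symmetric if its value depends only on the weight (number of 1 components) of its input. *)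

From mathcomp Require Import all_boot all_order all_algebra.
From mathcomp Require Import boolp Rstruct.
From Stdlib Require Import Reals.
Set Implicit Arguments. Unset Strict Implicit. Unset Printing Implicit Defensive.
Import Order.TTheory GRing.Theory Num.Theory.
Local Open Scope ring_scope.

Definition bvec (n : nat) := {ffun 'I_n -> bool}.

Definition pt (n : nat) := 'rV[R]_n.

Definition emb n (a : bvec n) : pt n := \row_i ((a i : nat)%:R).

Definition dist n (x y : pt n) : R := Num.sqrt (\sum_i (x 0 i - y 0 i) ^+ 2).

Definition weight n (a : bvec n) : nat := (\sum_i (a i : nat))%N.

Definition symmetric_fun n (f : bvec n -> bool) : Prop :=
  forall a b : bvec n, weight a = weight b -> f a = f b.

Definition parity n (a : bvec n) : bool := \big[addb/false]_i a i.

(* (P, N) is a nearest neighbor representation of f; the finite sets of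
   prototypes are given as duplicate-free sequences. *)
Definition NN_rep n (f : bvec n -> bool) (P N : seq (pt n)) : Prop :=
  [/\ uniq P, uniq N, ~~ has (mem N) P &
    forall a : bvec n,
      (f a -> exists2 b, b \in P & forall c, c \in N -> dist (emb a) b < dist (emb a) c) /\
      (~~ f a -> exists2 b, b \in N & forall c, c \in P -> dist (emb a) b < dist (emb a) c)].

(* size |P u N| = |P| + |N| since P, N are disjoint *)
Definition NN_size_ok n (f : bvec n -> bool) (k : nat) : Prop :=
  exists P N, NN_rep f P N /\ (size P + size N)%N = k.

Definition BNN_size_ok n (f : bvec n -> bool) (k : nat) : Prop :=
  exists P N, NN_rep f P N /\ (size P + size N)%N = k /\
    (forall b, b \in P ++ N -> exists a : bvec n, b = emb a).

Lemma emb_inj n : injective (@emb n).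
Proof.
move=> a b /matrixP H; apply/ffunP=> i; have := H 0 i; rewrite !mxE.
by case: (a i); case: (b i) => //= /eqP; rewrite ?oner_eq0 // eq_sym oner_eq0.
Qed.

Lemma dist_xx n (x : pt n) : dist x x = 0.
Proof. by rewrite /dist big1 ?sqrtr0 // => i _; rewrite subrr expr0n. Qed.

Lemma dist_gt0 n (x y : pt n) : x != y -> 0 < dist x y.
Proof.
move=> Hxy; rewrite /dist sqrtr_gt0 lt_def sumr_ge0 ?andbT; last by move=> i _; exact: sqr_ge0.
apply: contra Hxy => /eqP /psumr_eq0P H; apply/eqP/matrixP => i j.
have /(_ j isT) /eqP := H (fun k _ => sqr_ge0 _); rewrite [i]ord1.
by rewrite sqrf_eq0 subr_eq0 => /eqP.
Qed.

Definition full_P n (f : bvec n -> bool) := [seq emb a | a <- enum (bvec n) & f a].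
Definition full_N n (f : bvec n -> bool) := [seq emb a | a <- enum (bvec n) & ~~ f a].

Lemma full_rep n (f : bvec n -> bool) : NN_rep f (full_P f) (full_N f).
Proof.
have memP a : (emb a \in full_P f) = f a.
  by rewrite /full_P (mem_map (@emb_inj n)) mem_filter mem_enum andbT.
have memN a : (emb a \in full_N f) = ~~ f a.
  by rewrite /full_N (mem_map (@emb_inj n)) mem_filter mem_enum andbT.
split.
- by rewrite (map_inj_uniq (@emb_inj n)) filter_uniq // enum_uniq.
- by rewrite (map_inj_uniq (@emb_inj n)) filter_uniq // enum_uniq.
- apply/hasPn => x /mapP [a]; rewrite mem_filter => /andP [fa _] ->.
  by rewrite /= memN fa.
- move=> a; split.
  + move=> fa; exists (emb a); first by rewrite memP.
    move=> c /mapP [a' ]; rewrite mem_filter => /andP [fa' _] ->.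
    rewrite dist_xx dist_gt0 //; apply: contraNneq fa' => /emb_inj <-; by rewrite fa.
  + move=> fa; exists (emb a); first by rewrite memN.
    move=> c /mapP [a' ]; rewrite mem_filter => /andP [fa' _] ->.
    rewrite dist_xx dist_gt0 //; apply: contraNneq fa => /emb_inj ->; by [].
Qed.

Lemma BNN_exists n (f : bvec n -> bool) : exists k, asbool (BNN_size_ok f k).
Proof.
exists (size (full_P f) + size (full_N f))%N; apply/asboolP.
exists (full_P f), (full_N f); split; first exact: full_rep.
split=> // b; rewrite mem_cat => /orP [] /mapP [a _ ->]; by exists a.
Qed.

Lemma NN_exists n (f : bvec n -> bool) : exists k, asbool (NN_size_ok f k).
Proof.
have [k /asboolP [P [N [H1 [H2 _]]]]] := BNN_exists f.
by exists k; apply/asboolP; exists P, N.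
Qed.

Definition NN n (f : bvec n -> bool) : nat := ex_minn (NN_exists f).

Definition BNN n (f : bvec n -> bool) : nat := ex_minn (BNN_exists f).

(* (a) Put the n + 1 prototypes k/n * (1, ..., 1), 0 <= k <= n, on the diagonal, labelled
   by the value of f in weight k.  For a point a of weight w,
   n * |a - k/n * (1, ..., 1)|^2 = w (n - w) + (k - w)^2, so the prototype of index w is
   the unique nearest one and it carries the label f(a).
   (b) The full set of 2^n points is a Boolean representation of parity.  Conversely,
   if a were not a Boolean prototype, let b be the winning prototype of a and a' the
   neighbour of a one step closer to b.  The winning prototype b' of a' has the opposite
   label, so it beats b at a' and loses to b at a; with d the Hamming distance this gives
   d(a, b) < d(a, b') <= 1 + d(a', b') < 1 + d(a', b) = d(a, b). *)
From mathcomp Require Import all_boot all_order all_algebra.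
From mathcomp Require Import boolp Rstruct.
From mathcomp Require Import ring zify.
Set Implicit Arguments. Unset Strict Implicit. Unset Printing Implicit Defensive.
Import Order.TTheory GRing.Theory Num.Theory.
Local Open Scope ring_scope.

Definition sqdist n (x y : pt n) := \sum_i (x 0 i - y 0 i) ^+ 2.

Lemma sqdist_ge0 n (x y : pt n) : 0 <= sqdist x y.
Proof. by apply: sumr_ge0 => i _; apply: sqr_ge0. Qed.

Lemma ltr_dist n (x y u v : pt n) :
  (dist x y < dist u v) = (sqdist x y < sqdist u v).
Proof.
have [uv_gt0|uv_le0] := ltP 0 (sqdist u v); first exact: ltr_sqrt.
have uv0 : sqdist u v = 0 by apply/le_anti; rewrite uv_le0 sqdist_ge0.
by rewrite /dist -/(sqdist u v) uv0 sqrtr0 !ltNge sqrtr_ge0 sqdist_ge0.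
Qed.

Lemma size_map_filterC (T U : Type) (h : T -> U) (p : pred T) (s : seq T) :
  (size [seq h x | x <- s & p x] + size [seq h x | x <- s & ~~ p x])%N = size s.
Proof. by rewrite !size_map !size_filter count_predC. Qed.

Lemma NN_le n (f : bvec n -> bool) k : NN_size_ok f k -> (NN f <= k)%N.
Proof. by move=> ok; rewrite /NN; case: ex_minnP => m _; apply; apply/asboolP. Qed.

Lemma BNN_le n (f : bvec n -> bool) k : BNN_size_ok f k -> (BNN f <= k)%N.
Proof. by move=> ok; rewrite /BNN; case: ex_minnP => m _; apply; apply/asboolP. Qed.

Lemma leq_BNN n (f : bvec n -> bool) m :
  (forall k, BNN_size_ok f k -> (m <= k)%N) -> (m <= BNN f)%N.
Proof. by move=> lb; rewrite /BNN; case: ex_minnP => k /asboolP /lb. Qed.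

Lemma NN_rep_labelled n (f : bvec n -> bool) (I : eqType) (s : seq I)
    (h : I -> pt n) (g : I -> bool) :
  uniq s -> {in s &, injective h} ->
  (forall a, exists k, [/\ k \in s, g k = f a &
     forall j, j \in s -> g j != g k -> dist (emb a) (h k) < dist (emb a) (h j)]) ->
  NN_rep f [seq h k | k <- s & g k] [seq h k | k <- s & ~~ g k].
Proof.
move=> s_uniq h_inj nearest.
have uniq_protos p : uniq [seq h k | k <- s & p k].
  rewrite map_inj_in_uniq ?filter_uniq //.
  by apply: sub_in2 h_inj => k; rewrite mem_filter => /andP [].
split; rewrite ?uniq_protos //.
  apply/hasPn => x /mapP [k]; rewrite mem_filter => /andP [gk ks] ->.
  apply/mapP => -[j]; rewrite mem_filter => /andP [gj js] /(h_inj _ _ ks js) kj.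
  by move: gj; rewrite -kj gk.
move=> a; have [k [ks gk k_nearest]] := nearest a.
have mem_k (p : pred I) : p k -> h k \in [seq h j | j <- s & p j].
  by move=> pk; apply: map_f; rewrite mem_filter pk ks.
split=> fa; (exists (h k); first by apply: mem_k; rewrite gk);
  move=> c /mapP [j]; rewrite mem_filter => /andP [gj js] ->;
  by apply: k_nearest; rewrite // gk; move: gj fa; case: (g j); case: (f a).
Qed.

Definition diag_proto n (k : nat) : pt n := const_mx (k%:R / n%:R).

Lemma weight_le n (a : bvec n) : (weight a <= n)%N.
Proof.
rewrite /weight -[leqRHS]card_ord -sum1_card.
by apply: leq_sum => i _; case: (a i).
Qed.

Lemma sqdist_emb_const n (a : bvec n) (t : Rdefinitions.R) :
  sqdist (emb a) (const_mx t) = (weight a)%:R * (1 - 2 * t) + n%:R * t ^+ 2.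
Proof.
rewrite /sqdist (eq_bigr (fun i => (a i : nat)%:R * (1 - 2 * t) + t ^+ 2)).
  rewrite big_split /= -mulr_suml sumr_const card_ord /weight natr_sum.
  by rewrite (mulr_natl (t ^+ 2)).
by move=> i _; rewrite !mxE; case: (a i) => /=; ring.
Qed.

Lemma mul_sqdist_diag_proto n (a : bvec n) k : (0 < n)%N ->
  n%:R * sqdist (emb a) (diag_proto n k)
  = (weight a)%:R * (n%:R - (weight a)%:R) + (k%:R - (weight a)%:R) ^+ 2.
Proof.
move=> n_gt0; rewrite sqdist_emb_const; field.
by rewrite pnatr_eq0 -lt0n.
Qed.

Lemma diag_proto_nearest n (a : bvec n) j : (j <= n)%N -> j != weight a ->
  dist (emb a) (diag_proto n (weight a)) < dist (emb a) (diag_proto n j).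
Proof.
move=> j_le j_ne; have n_gt0 : (0 < n)%N by have := weight_le a; lia.
rewrite ltr_dist -(ltr_pM2l (_ : 0 < n%:R)) ?ltr0n //.
rewrite !mul_sqdist_diag_proto // subrr expr0n addr0 ltrDl.
by rewrite lt0r sqr_ge0 sqrf_eq0 subr_eq0 eqr_nat j_ne.
Qed.

Lemma diag_proto_inj n : {in [pred k | (k <= n)%N] &, injective (diag_proto n)}.
Proof.
case: n => [|n] j k; rewrite !inE.
  by rewrite !leqn0 => /eqP -> /eqP ->.
move=> _ _ /matrixP /(_ 0 ord0); rewrite !mxE => /(congr1 ( *%R^~ n.+1%:R)).
by rewrite !divfK ?pnatr_eq0 // => /eqP; rewrite eqr_nat => /eqP.
Qed.

Lemma NN_rep_weight n (f : bvec n -> bool) (g : nat -> bool) :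
  (forall a, f a = g (weight a)) ->
  NN_rep f [seq diag_proto n k | k <- iota 0 n.+1 & g k]
           [seq diag_proto n k | k <- iota 0 n.+1 & ~~ g k].
Proof.
move=> fg; apply: NN_rep_labelled; first exact: iota_uniq.
  by move=> j k; rewrite !mem_iota !add0n !ltnS; apply: diag_proto_inj.
move=> a; exists (weight a); split; rewrite ?fg //.
  by rewrite mem_iota ltnS weight_le.
move=> j; rewrite mem_iota ltnS => /andP [_ j_le] gj.
by apply: diag_proto_nearest => //; apply: contraNneq gj => ->.
Qed.

Lemma symmetric_fun_weight n (f : bvec n -> bool) :
  symmetric_fun f -> exists g : nat -> bool, forall a, f a = g (weight a).
Proof.
move=> sym; exists (fun k => [exists b, (weight b == k) && f b]) => a.
apply/idP/existsP => [fa | [b /andP [/eqP wb fb]]]; first by exists a; rewrite eqxx.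
by rewrite (sym a b (esym wb)).
Qed.

Lemma NN_symmetric n (f : bvec n -> bool) : symmetric_fun f -> (NN f <= n.+1)%N.
Proof.
case/symmetric_fun_weight => g fg; apply: NN_le.
exists [seq diag_proto n k | k <- iota 0 n.+1 & g k].
exists [seq diag_proto n k | k <- iota 0 n.+1 & ~~ g k].
split; first exact: NN_rep_weight fg.
exact: etrans (size_map_filterC _ _ _) (size_iota 0 n.+1).
Qed.

Definition hamming n (a b : bvec n) : nat := (\sum_i (a i != b i))%N.

Definition flip n (a : bvec n) (i : 'I_n) : bvec n := [ffun j => (j == i) (+) a j].

Lemma sqdist_emb n (a b : bvec n) : sqdist (emb a) (emb b) = (hamming a b)%:R.
Proof.
rewrite /sqdist /hamming natr_sum; apply: eq_bigr => i _; rewrite !mxE.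
by case: (a i); case: (b i); rewrite /= ?subrr ?expr0n ?subr0 ?sub0r ?sqrrN ?expr1n.
Qed.

Lemma ltr_dist_emb n (a b c : bvec n) :
  (dist (emb a) (emb b) < dist (emb a) (emb c)) = (hamming a b < hamming a c)%N.
Proof. by rewrite ltr_dist !sqdist_emb ltr_nat. Qed.

Lemma hamming_flip n (a b : bvec n) i :
  (hamming (flip a i) b + (a i != b i) = hamming a b + (a i == b i))%N.
Proof.
rewrite /hamming (bigD1 i) // [in RHS](bigD1 i) //= ffunE eqxx.
under eq_bigr => j ji do rewrite ffunE (negbTE ji).
by case: (a i); case: (b i) => /=; lia.
Qed.

Lemma parity_flip n (a : bvec n) i : parity (flip a i) = ~~ parity a.
Proof.
rewrite /parity (eq_bigr (fun j => (j == i) (+) a j)) => [|j _]; last by rewrite ffunE.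
by rewrite big_split /= (bigD1 i) //= eqxx big1 => [|j /negbTE].
Qed.

Lemma NN_rep_nearest n (f : bvec n -> bool) P N : NN_rep f P N -> forall a,
  exists2 b, b \in (if f a then P else N) &
    forall c, c \in (if ~~ f a then P else N) -> dist (emb a) b < dist (emb a) c.
Proof.
case=> _ _ _ rep a; have [inP inN] := rep a.
by case: (f a) inP inN => [/(_ isT) | _ /(_ isT)].
Qed.

Lemma mem_if_cat (T : eqType) (P N : seq T) (v : bool) x :
  x \in (if v then P else N) -> x \in P ++ N.
Proof. by case: v; rewrite mem_cat => ->; rewrite ?orbT. Qed.

Lemma NN_rep_boolean_covers n (f : bvec n -> bool) P N :
  (forall a i, f (flip a i) = ~~ f a) -> NN_rep f P N ->
  (forall b, b \in P ++ N -> exists a, b = emb a) ->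
  forall a, emb a \in P ++ N.
Proof.
move=> f_flip rep boolean a; apply/negPn/negP => a_out.
have [_ /[dup] /mem_if_cat /boolean [b ->] b_in b_wins] := NN_rep_nearest rep a.
have [i a_ne_b] : exists i, a i != b i.
  apply/existsP; apply: contraNT a_out => /existsPn same.
  suff -> : a = b by apply: mem_if_cat b_in.
  by apply/ffunP => j; apply/eqP/negPn/same.
have [_ /[dup] /mem_if_cat /boolean [b' ->] b'_in b'_wins] :=
  NN_rep_nearest rep (flip a i).
rewrite f_flip in b'_in b'_wins.
have := b_wins _ b'_in; have := b'_wins (emb b); rewrite negbK => /(_ b_in).
rewrite !ltr_dist_emb; have := hamming_flip a b i; have := hamming_flip a b' i.
by rewrite (negbTE a_ne_b); case: (a i != b' i); case: (a i == b' i) => /=; lia.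
Qed.

Lemma card_bvec n : #|bvec n| = (2 ^ n)%N.
Proof. by rewrite card_ffun card_bool card_ord. Qed.

Lemma BNN_parity n : BNN (@parity n) = (2 ^ n)%N.
Proof.
apply/eqP; rewrite eqn_leq; apply/andP; split.
  apply: BNN_le; exists (full_P (@parity n)), (full_N (@parity n)).
  split; first exact: full_rep.
  split; first by apply: etrans (size_map_filterC _ _ _) _; rewrite -cardT card_bvec.
  by move=> b; rewrite mem_cat => /orP [] /mapP [a _ ->]; exists a.
apply: leq_BNN => _ [P [N [rep [<- boolean]]]].
(* the sum in [BNN_size_ok] is the generic [+] of the nmodType [nat], not [addn] *)
change (2 ^ n <= size P + size N)%N.
rewrite -card_bvec cardT -(size_map (@emb n)) -size_cat.
apply: uniq_leq_size; first by rewrite (map_inj_uniq (@emb_inj n)) enum_uniq.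
move=> _ /mapP [a _ ->]; apply: NN_rep_boolean_covers rep boolean a.
exact: parity_flip.
Qed.

Theorem proposition1 :
  (forall (n : nat) (f : bvec n -> bool), symmetric_fun f -> (NN f <= n.+1)%N) /\
  (forall n : nat, BNN (@parity n) = (2 ^ n)%N).
Proof. by split; [apply: NN_symmetric | apply: BNN_parity]. Qed.
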